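(* The maximum-matching size $m(\cdot)$ and the minimum vertex-cover size $VC(\cdot)$, viewed as functions on graph streams, are both $2$-almost-smooth.
   Context: A graph stream is a sequence of edges of a simple graph on vertex set $V=[n]$ (no edge appears twice). For a stream segment $S$, $m(S)$ is the maximum size of a matching (set of pairwise vertex-disjoint edges) in the graph on $V$ whose edges are those of $S$, and $VC(S)$ is the minimum size of a vertex cover (set of vertices meeting every edge) of that graph. For disjoint consecutive segments $A,B$, $AB$ is their concatenation. A function $f$ is $2$-almost-smooth if: (1) $f(A)\ge0$ for all $A$; (2) $f(B)\le f(AB)$ for all disjoint segments $A,B$; (3) $f(A)\le\mathrm{poly}(n)$; (4) for all disjoint consecutive segments $A,B,C$ with $f(AB)\neq0$, $f(ABC)\neq0$, $\frac{f(B)}{f(AB)}\le 2\cdot\frac{f(BC)}{f(ABC)}$. *)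

From mathcomp Require Import all_boot all_order all_algebra.
Set Implicit Arguments. Unset Strict Implicit. Unset Printing Implicit Defensive.
Import Order.TTheory GRing.Theory Num.Theory.

(* Vertex set V = [n] is 'I_n; an edge of a simple graph is a 2-element
   subset of V; a stream segment is a sequence of edges. *)
Definition edge n := {set 'I_n}.

Definition is_stream n (S : seq (edge n)) : bool :=
  uniq S && all (fun e : {set 'I_n} => #|e| == 2) S.

Definition is_matching n (S : seq (edge n)) (M : {set {set 'I_n}}) : bool :=
  [forall e in M, e \in S] &&
  [forall e in M, forall f in M, (e != f) ==> [disjoint e & f]].

Definition is_vcover n (S : seq (edge n)) (C : {set 'I_n}) : bool :=
  all (fun e : {set 'I_n} => ~~ [disjoint e & C]) S.

Definition max_matching n (S : seq (edge n)) : nat :=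
  \max_(M : {set {set 'I_n}} | is_matching S M) #|M|.

(* VC(S): minimum size of a vertex cover (V itself is a cover of size n,
   so the initial value n of the min-fold does not affect the result). *)
Definition min_vcover n (S : seq (edge n)) : nat :=
  \big[minn/n]_(C : {set 'I_n} | is_vcover S C) #|C|.

Local Open Scope ring_scope.

Definition almost_smooth (beta : rat) (f : forall n, seq (edge n) -> rat) : Prop :=
  (forall n (A : seq (edge n)), is_stream A -> 0 <= f n A) /\
  (forall n (A B : seq (edge n)), is_stream (A ++ B) -> f n B <= f n (A ++ B)) /\
  (exists (c k : nat), forall n (A : seq (edge n)), is_stream A ->
       f n A <= (c * n ^ k + c)%:R) /\
  (forall n (A B C : seq (edge n)), is_stream (A ++ B ++ C) ->
       f n (A ++ B) != 0 -> f n (A ++ B ++ C) != 0 ->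
       f n B / f n (A ++ B) <= beta * (f n (B ++ C) / f n (A ++ B ++ C))).

From mathcomp Require Import all_boot all_order all_algebra.
From mathcomp Require Import lra.
Import Order.TTheory GRing.Theory Num.Theory.
Set Implicit Arguments. Unset Strict Implicit. Unset Printing Implicit Defensive.

(* Both m and VC are monotone in the edge set, bounded by n + 1, and
   subadditive under concatenation: a matching of S ++ T splits into a
   matching of S and one of T, and covers of S and T unite into a cover of
   S ++ T.  For such an f, put x = f(B), so x <= f(AB) and x <= f(BC), while
   f(ABC) <= f(AB) + f(BC); then x f(ABC) <= x f(AB) + x f(BC) <= 2 f(AB) f(BC),
   which is the smoothness inequality with beta = 2. *)

Lemma ler_ratio_twice (R : realFieldType) (a b c d : R) :
  (0 <= a -> a <= b -> a <= c -> d <= b + c -> 0 < b -> 0 < d ->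
  a / b <= 2 * (c / d))%R.
Proof.
move=> a_ge0 le_ab le_ac le_dbc b_gt0 d_gt0.
rewrite mulrA ler_pdivrMr // mulrAC ler_pdivlMr //.
nra.
Qed.

Section MonotoneSubadditive.

Variable f : forall n, seq (edge n) -> nat.
Hypothesis f_mono :
  forall n (S T : seq (edge n)), {subset S <= T} -> f S <= f T.
Hypothesis f_subadd :
  forall n (S T : seq (edge n)), f (S ++ T) <= f S + f T.
Hypothesis f_bounded : forall n (S : seq (edge n)), f S <= n.+1.

Lemma almost_smooth_subadditive :
  almost_smooth 2%:R (fun n S => (f S)%:R)%R.
Proof.
split; first by move=> n A _; rewrite ler0n.
split.
  by move=> n A B _; rewrite ler_nat f_mono //; apply/mem_subseq/suffix_subseq.
split; first by exists 1, 1 => n A _; rewrite ler_nat mul1n expn1 addn1 f_bounded.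
move=> n A B C _; rewrite !pnatr_eq0 => fAB_neq0 fABC_neq0.
apply: ler_ratio_twice; rewrite ?ler0n ?ltr0n ?lt0n -?natrD ?ler_nat //.
- by apply/f_mono/mem_subseq/suffix_subseq.
- by apply/f_mono/mem_subseq/prefix_subseq.
- apply: leq_trans (f_subadd (A ++ B) (B ++ C)); apply: f_mono => x.
  by rewrite !mem_cat => /or3P[] ->; rewrite ?orbT.
Qed.

End MonotoneSubadditive.

Lemma is_matching_sub n (S S' : seq (edge n)) (M M' : {set {set 'I_n}}) :
  is_matching S M -> M' \subset M -> {in M', forall e, e \in S'} ->
  is_matching S' M'.
Proof.
case/andP=> _ /forall_inP disjM /subsetP subM M'S'; apply/andP; split.
  by apply/forall_inP.
apply/forall_inP => e /subM eM; apply/forall_inP => e' /subM.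
by move/forall_inP: (disjM _ eM); apply.
Qed.

Lemma matching_edge n (S : seq (edge n)) M e :
  is_matching S M -> e \in M -> e \in S.
Proof. by case/andP=> /forall_inP MS _ /MS. Qed.

Lemma leq_max_matching n (S : seq (edge n)) M :
  is_matching S M -> #|M| <= max_matching S.
Proof. exact: leq_bigmax_cond. Qed.

Lemma card_matching_le n (S : seq (edge n)) M : is_matching S M -> #|M| <= n.+1.
Proof.
move=> matchM; pose pick_vertex (e : {set 'I_n}) := [pick x in e].
(* Distinct edges of a matching are disjoint, so at most the empty edge is
   sent to None and no vertex is picked twice. *)
have pick_inj : {in M &, injective pick_vertex}.
  move=> e e' eM e'M; rewrite /pick_vertex.
  case: pickP => [x xe|e0]; case: pickP => [y ye'|e'0] //.
    move=> [eq_xy]; rewrite -eq_xy in ye'; apply/eqP; apply: contraT => neq_ee'.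
    case/andP: matchM => _ /forall_inP/(_ _ eM)/forall_inP/(_ _ e'M).
    by rewrite neq_ee' /= => /disjointFr/(_ xe); rewrite ye'.
  by move=> _; apply/setP => x; rewrite e0 e'0.
rewrite -(card_in_imset pick_inj).
by apply: leq_trans (max_card _) _; rewrite card_option card_ord.
Qed.

Lemma max_matching_mono n (S T : seq (edge n)) :
  {subset S <= T} -> max_matching S <= max_matching T.
Proof.
move=> subST; apply/bigmax_leqP => M matchM; apply: leq_max_matching.
by apply: (is_matching_sub matchM (subxx _)) => e /(matching_edge matchM)/subST.
Qed.

Lemma max_matching_cat n (S T : seq (edge n)) :
  max_matching (S ++ T) <= max_matching S + max_matching T.
Proof.
apply/bigmax_leqP => M matchM; pose MS := [set e | e \in S].
rewrite -(cardsID MS M); apply: leq_add; apply: leq_max_matching.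
  by apply: (is_matching_sub matchM (subsetIl _ _)) => e; rewrite !inE => /andP[].
apply: (is_matching_sub matchM (subsetDl _ _)) => e; rewrite !inE => /andP[eS eM].
by move: (matching_edge matchM eM); rewrite mem_cat (negbTE eS).
Qed.

Lemma max_matching_bounded n (S : seq (edge n)) : max_matching S <= n.+1.
Proof. by apply/bigmax_leqP => M /card_matching_le. Qed.

Lemma is_vcover_sub n (S T : seq (edge n)) C :
  {subset S <= T} -> is_vcover T C -> is_vcover S C.
Proof. by move=> subST /allP coverT; apply/allP => e /subST/coverT. Qed.

Lemma is_vcover_cat n (S T : seq (edge n)) (C D : {set 'I_n}) :
  is_vcover S C -> is_vcover T D -> is_vcover (S ++ T) (C :|: D).
Proof.
move=> coverC coverD; rewrite /is_vcover all_cat; apply/andP; split.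
  by apply: sub_all coverC => e; apply: contra; apply/disjointWr/subsetUl.
by apply: sub_all coverD => e; apply: contra; apply/disjointWr/subsetUr.
Qed.

Lemma min_vcover_le n (S : seq (edge n)) C : is_vcover S C -> min_vcover S <= #|C|.
Proof. by rewrite /min_vcover -minEnat -leEnat; apply: bigmin_le_cond. Qed.

Lemma min_vcover_bounded n (S : seq (edge n)) : min_vcover S <= n.
Proof. by rewrite /min_vcover -minEnat -leEnat; apply: bigmin_le_id. Qed.

Lemma leq_min_vcover n (S : seq (edge n)) k :
  k <= n -> (forall C, is_vcover S C -> k <= #|C|) -> k <= min_vcover S.
Proof. by rewrite /min_vcover -minEnat -leEnat; apply: le_bigmin. Qed.

Lemma min_vcover_mono n (S T : seq (edge n)) :
  {subset S <= T} -> min_vcover S <= min_vcover T.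
Proof.
move=> subST; apply: leq_min_vcover (min_vcover_bounded S) _ => C coverC.
exact/min_vcover_le/(is_vcover_sub subST).
Qed.

(* Rearranged with truncated subtraction, each of the two minima on the right
   is bounded below separately by leq_min_vcover. *)
Lemma min_vcover_cat n (S T : seq (edge n)) :
  min_vcover (S ++ T) <= min_vcover S + min_vcover T.
Proof.
have le_n k : min_vcover (S ++ T) - k <= n.
  exact: leq_trans (leq_subr _ _) (min_vcover_bounded _).
rewrite -leq_subLR; apply: leq_min_vcover (le_n _) _ => D coverD.
rewrite leq_subLR addnC -leq_subLR; apply: leq_min_vcover (le_n _) _ => C coverC.
rewrite leq_subLR addnC; apply: leq_trans (leq_card_setU C D).
exact/min_vcover_le/is_vcover_cat.
Qed.

Theorem corollary2p5 :
  almost_smooth (2%:R)%R (fun n (S : seq (edge n)) => ((max_matching S)%:R)%R) /\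
  almost_smooth (2%:R)%R (fun n (S : seq (edge n)) => ((min_vcover S)%:R)%R).
Proof.
split; apply: almost_smooth_subadditive.
- exact: max_matching_mono.
- exact: max_matching_cat.
- exact: max_matching_bounded.
- exact: min_vcover_mono.
- exact: min_vcover_cat.
- by move=> n S; apply: leq_trans (min_vcover_bounded S) _.
Qed.
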